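(* A square complex matrix $U$ is unitary with all entries in $\mathcal{R}_{12}$ if and only if $U$ can be expressed as a product of one-level operators of type $\zeta_{12}$ and two-level operators of type $X$ and of type $H'$ (of the same dimension as $U$).
   Context: $\zeta_{12}=e^{2\pi i/12}$ and $\mathcal{R}_{12}$ is the smallest subring of $\mathbb{C}$ containing $1/2$ and $\zeta_{12}$. $X=\begin{bmatrix}0&1\\1&0\end{bmatrix}$ and $H'=\frac{1+i}{2}\begin{bmatrix}1&1\\1&-1\end{bmatrix}$. For $c\in\mathbb{C}$ and $0\le j\le m-1$, the one-level operator of type $c$ is the $m\times m$ matrix $c_{[j]}$ equal to the identity except that its $(j,j)$ entry is $c$. For $M\in\mathrm{M}_2(\mathbb{C})$ and $0\le j<j'\le m-1$, the two-level operator of type $M$ is the $m\times m$ matrix $M_{[j,j']}$ equal to the identity except that its entries in positions $(j,j),(j,j'),(j',j),(j',j')$ are $M_{1,1},M_{1,2},M_{2,1},M_{2,2}$ respectively. *)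

From HB Require Import structures.
From mathcomp Require Import all_boot all_order all_algebra.
From mathcomp Require Import reals.
From mathcomp.real_closed Require Import complex.
Set Implicit Arguments. Unset Strict Implicit. Unset Printing Implicit Defensive.
Import Order.TTheory GRing.Theory Num.Theory.
Local Open Scope ring_scope.

Section Defs.
Variable R : realType.
Local Notation C := R[i].

(* zeta_12 = e^{2 pi i/12} = cos(pi/6) + i sin(pi/6) = sqrt 3/2 + i/2 *)
Definition zeta12 : C := Complex (Num.sqrt 3 / 2) (1 / 2).

(* membership in R_12: the smallest subring of C containing 1/2 and zeta12 *)
Definition in_R12 (x : C) : Prop :=
  forall S : C -> Prop,
    S 1 ->
    (forall a b, S a -> S b -> S (a - b)) ->
    (forall a b, S a -> S b -> S (a * b)) ->
    S (1 / 2) -> S zeta12 -> S x.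

Definition conj_tr (m : nat) (U : 'M[C]_m) : 'M[C]_m := map_mx Num.conj U^T.

Definition unitary (m : nat) (U : 'M[C]_m) : Prop :=
  U *m conj_tr U = 1%:M /\ conj_tr U *m U = 1%:M.

Definition i0 : 'I_2 := Ordinal (isT : (0 < 2)%N).
Definition i1 : 'I_2 := Ordinal (isT : (1 < 2)%N).

Definition Xgate : 'M[C]_2 :=
  \matrix_(a < 2, b < 2) (if a == b then 0 else 1).

Definition Hprime : 'M[C]_2 :=
  \matrix_(a < 2, b < 2)
     ((1 + 'i) / 2 * (if (a == i1) && (b == i1) then -1 else 1)).

Definition one_level (m : nat) (c : C) (j : 'I_m) : 'M[C]_m :=
  \matrix_(a, b) (if a == b then (if a == j then c else 1) else 0).

Definition two_level (m : nat) (M : 'M[C]_2) (j j' : 'I_m) : 'M[C]_m :=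
  \matrix_(a, b)
    (if (a == j) && (b == j) then M i0 i0
     else if (a == j) && (b == j') then M i0 i1
     else if (a == j') && (b == j) then M i1 i0
     else if (a == j') && (b == j') then M i1 i1
     else if a == b then 1 else 0).

Definition generator (m : nat) (G : 'M[C]_m) : Prop :=
  (exists j : 'I_m, G = one_level zeta12 j) \/
  (exists (j j' : 'I_m), (j < j')%N /\
      (G = two_level Xgate j j' \/ G = two_level Hprime j j')).

Definition mx_prod (m : nat) (s : seq 'M[C]_m) : 'M[C]_m := foldr mulmx 1%:M s.
End Defs.

From HB Require Import structures.
From mathcomp Require Import all_boot all_order all_algebra.
From mathcomp Require Import reals boolp.
From mathcomp.real_closed Require Import complex.
From mathcomp Require Import ring lra zify.
Import Order.TTheory GRing.Theory Num.Theory.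
Local Open Scope ring_scope.
Set Implicit Arguments. Unset Strict Implicit. Unset Printing Implicit Defensive.

(* Products of the generators are unitary with entries in R12 because the
   generators are.  Conversely, the entries of U lie in Z[zeta12][1/2], and as
   2 = -i (1 + i)^2 every column of U becomes integral, i.e. lies in Z[zeta12],
   after multiplication by some (1 + i)^k.  The columns are cleared one at a
   time by inverses of generators acting on the rows below the current column,
   which leaves the columns already cleared untouched.  The squared moduli of
   the entries of the scaled column add up to 2^k; modulo 2 this forces the
   entries not divisible by 1 + i to come in pairs whose residues agree up to a
   power of zeta12, and a one-level power of zeta12 followed by H' on such a
   pair makes both entries divisible by 1 + i.  Once every entry is divisible,
   k drops by one.  At k = 0 the column has a single nonzero entry, a power of
   zeta12, which X and a one-level operator move to the diagonal. *)

(** * The ring Z[zeta12] in coordinates *)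

(* (a, b, c, d) : cyc12 T stands for a + b z + c z^2 + d z^3 in T[z]/(z^4 - z^2 + 1),
   the minimal polynomial of zeta12. *)
Definition cyc12 (T : Type) : Type := (T * T * T * T)%type.

Section Cyc12Ring.
Variable T : comNzRingType.
Local Notation Z := (cyc12 T).

HB.instance Definition _ := GRing.Zmodule.copy Z (T * T * T * T)%type.

Definition cyc (a b c d : T) : Z := (a, b, c, d).

Definition cyc12_mul (x y : Z) : Z :=
  let: (a, b, c, d) := x in let: (e, f, g, h) := y in
  cyc (a * e - (b * h + c * g + d * f) - d * h)
      (a * f + b * e - (c * h + d * g))
      (a * g + b * f + c * e + (b * h + c * g + d * f))
      (a * h + b * g + c * f + d * e + (c * h + d * g)).

Fact cyc12_mulA : associative cyc12_mul.
Proof. by move=> [[[a b] c] d] [[[e f] g] h] [[[p q] r] s]; congr (_, _, _, _); ring. Qed.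

Fact cyc12_mulC : commutative cyc12_mul.
Proof. by move=> [[[a b] c] d] [[[e f] g] h]; congr (_, _, _, _); ring. Qed.

Fact cyc12_mul1 : left_id (cyc 1 0 0 0) cyc12_mul.
Proof. by move=> [[[a b] c] d]; congr (_, _, _, _); ring. Qed.

Fact cyc12_mulDl : left_distributive cyc12_mul +%R.
Proof. by move=> [[[a b] c] d] [[[e f] g] h] [[[p q] r] s]; congr (_, _, _, _) => /=; ring. Qed.

Fact cyc12_one_neq0 : cyc 1 0 0 0 != 0.
Proof. by apply/eqP => -[/eqP]; rewrite oner_eq0. Qed.

HB.instance Definition _ := GRing.Zmodule_isComNzRing.Build Z
  cyc12_mulA cyc12_mulC cyc12_mul1 cyc12_mulDl cyc12_one_neq0.

Lemma cycD a b c d a' b' c' d' :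
  cyc a b c d + cyc a' b' c' d' = cyc (a + a') (b + b') (c + c') (d + d').
Proof. by []. Qed.

Lemma cyc12_sumE (I : Type) (r : seq I) (P : pred I) (F : I -> Z) :
  \sum_(i <- r | P i) F i =
  cyc (\sum_(i <- r | P i) (F i).1.1.1) (\sum_(i <- r | P i) (F i).1.1.2)
      (\sum_(i <- r | P i) (F i).1.2) (\sum_(i <- r | P i) (F i).2).
Proof.
elim: r => [|i r IH]; first by rewrite !big_nil.
by rewrite !big_cons; case: (P i); rewrite IH.
Qed.

Lemma cyc12_natr n : n%:R = cyc n%:R 0 0 0 :> Z.
Proof. by elim: n => [|n IH]; rewrite ?mulr0n // !mulrS IH cycD !addr0. Qed.

(* zetac = zeta - zeta^3 is the conjugate of zeta, and deltac = 1 - i as i = zeta^3. *)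
Definition zetac : Z := cyc 0 1 0 (-1).
Definition deltac : Z := cyc 1 0 0 (-1).

Definition cyc12_conj (x : Z) : Z := let: (a, b, c, d) := x in cyc (a + c) b (- c) (- b - d).
Definition cyc12_norm (x : Z) : Z := x * cyc12_conj x.

End Cyc12Ring.

Section Cyc12Map.
Variables (T T' : comNzRingType) (f : {rmorphism T -> T'}).

Definition cyc12_map (x : cyc12 T) : cyc12 T' :=
  let: (a, b, c, d) := x in cyc (f a) (f b) (f c) (f d).

Fact cyc12_map_is_zmod_morphism : zmod_morphism cyc12_map.
Proof. by move=> [[[a b] c] d] [[[e g] h] k]; rewrite /= !rmorphB. Qed.

Fact cyc12_map_is_monoid_morphism : monoid_morphism cyc12_map.
Proof.
split; first by rewrite /= rmorph1 rmorph0.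
by move=> [[[a b] c] d] [[[e g] h] k]; rewrite /= !(rmorphB, rmorphD, rmorphM).
Qed.

HB.instance Definition _ := GRing.isZmodMorphism.Build _ _ cyc12_map
  cyc12_map_is_zmod_morphism.
HB.instance Definition _ := GRing.isMonoidMorphism.Build _ _ cyc12_map
  cyc12_map_is_monoid_morphism.

Lemma cyc12_map_norm x : cyc12_map (cyc12_norm x) = cyc12_norm (cyc12_map x).
Proof.
by rewrite rmorphM; case: x => [[[a b] c] d]; rewrite /= !(rmorphB, rmorphD, rmorphN).
Qed.

Lemma cyc12_map_zetac : cyc12_map (zetac T) = zetac T'.
Proof. by rewrite /= rmorph0 rmorph1 rmorphN1. Qed.

Lemma cyc12_map_deltac : cyc12_map (deltac T) = deltac T'.
Proof. by rewrite /= rmorph0 rmorph1 rmorphN1. Qed.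

End Cyc12Map.

(* The rational part of |x|^2. *)
Definition cyc12_qf (x : cyc12 int) : int :=
  let: (a, b, c, d) := x in a * a + b * b + c * c + d * d + a * c + b * d.

Lemma cyc12_qf_norm x : 2 * (cyc12_norm x).1.1.1 + (cyc12_norm x).1.2 = 2 * cyc12_qf x.
Proof. by case: x => [[[a b] c] d] /=; ring. Qed.

Lemma cyc12_qf_sqr a b c d : 4 * cyc12_qf (cyc a b c d) =
  (2 * a + c) ^+ 2 + 3 * c ^+ 2 + (2 * b + d) ^+ 2 + 3 * d ^+ 2.
Proof. by rewrite /=; ring. Qed.

Lemma cyc12_qf_ge0 x : 0 <= cyc12_qf x.
Proof.
case: x => [[[a b] c] d]; have := cyc12_qf_sqr a b c d.
have := sqr_ge0 (2 * a + c); have := sqr_ge0 c; have := sqr_ge0 (2 * b + d).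
have := sqr_ge0 d; rewrite /= !expr2; lia.
Qed.

Lemma cyc12_qf_eq0 x : cyc12_qf x = 0 -> x = 0.
Proof.
case: x => [[[a b] c] d] h; have := cyc12_qf_sqr a b c d; rewrite h mulr0.
have := sqr_ge0 (2 * a + c); have := sqr_ge0 c; have := sqr_ge0 (2 * b + d).
have := sqr_ge0 d => ? ? ? ? sum0.
have sqr_eq0 (y : int) : y ^+ 2 = 0 -> y = 0 by move/eqP; rewrite sqrf_eq0 => /eqP.
have /sqr_eq0 c0 : c ^+ 2 = 0 by lia.
have /sqr_eq0 d0 : d ^+ 2 = 0 by lia.
have /sqr_eq0 ac0 : (2 * a + c) ^+ 2 = 0 by lia.
have /sqr_eq0 bd0 : (2 * b + d) ^+ 2 = 0 by lia.
by congr (_, _, _, _); lia.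
Qed.

Lemma cyc12_qf_eq1 x : cyc12_qf x = 1 -> exists e, zetac _ ^+ e * x = 1.
Proof.
case: x => [[[a b] c] d] h; have := cyc12_qf_sqr a b c d; rewrite h mulr1.
have := sqr_ge0 (2 * a + c); have := sqr_ge0 c; have := sqr_ge0 (2 * b + d).
have := sqr_ge0 d => ? ? ? ? sum4.
have bound (y : int) k : y ^+ 2 <= k ^+ 2 -> 0 <= k -> - k <= y <= k.
  by rewrite !expr2 => ? ?; apply/andP; split; nia.
have /andP[? ?] : -1 <= c <= 1 by apply: bound; lia.
have /andP[? ?] : -1 <= d <= 1 by apply: bound; lia.
have /andP[? ?] : -2 <= 2 * a + c <= 2 by apply: bound; lia.
have /andP[? ?] : -2 <= 2 * b + d <= 2 by apply: bound; lia.
pose s : seq int := [:: -1; 0; 1].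
have mem_s (y : int) : -1 <= y <= 1 -> y \in s by move=> /andP[? ?]; rewrite !inE; lia.
have: all (fun a => all (fun b => all (fun c => all (fun d =>
    (cyc12_qf (cyc a b c d) == 1) ==>
    has (fun e => zetac _ ^+ e * cyc a b c d == 1) (iota 0 12)) s) s) s) s.
  by vm_compute.
have [a1 b1 c1 d1] : [/\ a \in s, b \in s, c \in s & d \in s] by split; apply: mem_s; lia.
move/allP/(_ a a1)/allP/(_ b b1)/allP/(_ c c1)/allP/(_ d d1)/implyP.
by rewrite h eqxx => /(_ isT)/hasP[e _ /eqP]; exists e.
Qed.

(** * Residues modulo 2 *)

Notation cyc12_red := (cyc12_map (intr : {rmorphism int -> 'F_2})).

Definition F2_enum : seq 'F_2 := [:: 0; 1].
Definition cyc12F2_enum : seq (cyc12 'F_2) :=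
  [seq (x, d) | x <- [seq (x, c) | x <- [seq (a, b) | a <- F2_enum, b <- F2_enum],
                                   c <- F2_enum], d <- F2_enum].

Lemma cyc12F2_allP (P : pred (cyc12 'F_2)) : all P cyc12F2_enum -> forall x, P x.
Proof.
have F2P (a : 'F_2) : a \in F2_enum by case: a => [[|[|//]] ?]; apply/orP; [left|right].
move=> /allP + [[[a b] c] d]; apply.
by rewrite !allpairs_f ?F2P // allpairs_f ?F2P.
Qed.

(* Since 2 = (1 + i) (1 - i) and 1 - i = - i (1 + i), divisibility by 1 + i
   depends only on the residue mod 2; this is the test on it. *)
Definition dvd_delta (x : cyc12 'F_2) : bool :=
  let: (a, b, c, d) := x in (b == c) && (a + b + d == 0).

Lemma dvd_delta_deltacM x : dvd_delta (deltac _ * x).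
Proof.
have: all (fun x => dvd_delta (deltac _ * x)) cyc12F2_enum by vm_compute.
by move/cyc12F2_allP/(_ x).
Qed.

Lemma deltacM_dvd_delta x : dvd_delta x -> deltac _ * x = 0.
Proof.
have: all (fun x => dvd_delta x ==> (deltac _ * x == 0)) cyc12F2_enum.
  by vm_compute.
by move/cyc12F2_allP/(_ x)/implyP => h /h/eqP.
Qed.

Lemma norm_Ndvd_delta x : ~~ dvd_delta x ->
  cyc12_norm x = cyc 0 0 0 1 \/ cyc12_norm x = 1.
Proof.
have: all (fun x => dvd_delta x || (cyc12_norm x == cyc 0 0 0 1)
                                || (cyc12_norm x == 1)) cyc12F2_enum.
  by vm_compute.
by move/cyc12F2_allP/(_ x) => + /negbTE ndx; rewrite ndx => /orP[] /eqP; [left|right].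
Qed.

Lemma Ndvd_delta_norm_eq x y : ~~ dvd_delta x -> ~~ dvd_delta y ->
  cyc12_norm x = cyc12_norm y -> exists e, x = zetac _ ^+ e * y.
Proof.
have: all (fun x => all (fun y =>
    [&& ~~ dvd_delta x, ~~ dvd_delta y & cyc12_norm x == cyc12_norm y] ==>
    has (fun e => x == zetac _ ^+ e * y) (iota 0 12)) cyc12F2_enum) cyc12F2_enum.
  by vm_compute.
move/cyc12F2_allP/(_ x)/cyc12F2_allP/(_ y)/implyP => h ndx ndy nxy.
have /h/hasP[e _ /eqP ->] : [&& ~~ dvd_delta x, ~~ dvd_delta y & cyc12_norm x == cyc12_norm y].
  by rewrite ndx ndy nxy eqxx.
by exists e.
Qed.

Lemma cyc12_red_eq0 y : cyc12_red y = 0 -> exists w, y = 2 * w.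
Proof.
have half (a : int) : (a%:~R : 'F_2) = 0 -> exists a', a = a' * 2.
  by move=> a0; apply/dvdzP; rewrite (dvdz_pcharf (pchar_Fp (isT : prime 2))) a0.
case: y => [[[a b] c] d] [] /half[a' ->] /half[b' ->] /half[c' ->] /half[d' ->].
by exists (cyc a' b' c' d'); rewrite cyc12_natr; congr (_, _, _, _); ring.
Qed.

Lemma norm_Ndvd_delta_coord x :
  (cyc12_norm x).2 = (~~ dvd_delta x && (cyc12_norm x == cyc 0 0 0 1))%:R /\
  (cyc12_norm x).1.1.1 = (~~ dvd_delta x && (cyc12_norm x == 1))%:R.
Proof.
have: all (fun x =>
    ((cyc12_norm x).2 == (~~ dvd_delta x && (cyc12_norm x == cyc 0 0 0 1))%:R) &&
    ((cyc12_norm x).1.1.1 == (~~ dvd_delta x && (cyc12_norm x == 1))%:R)) cyc12F2_enum.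
  by vm_compute.
by move/cyc12F2_allP/(_ x)/andP => [/eqP-> /eqP->].
Qed.

Lemma Ndvd_delta_partner (I : finType) (y : I -> cyc12 'F_2) j :
  \sum_i cyc12_norm (y i) = 0 -> ~~ dvd_delta (y j) ->
  exists2 j', j' != j & ~~ dvd_delta (y j') /\ cyc12_norm (y j') = cyc12_norm (y j).
Proof.
move=> sum0 yj; rewrite cyc12_sumE in sum0; case: sum0 => s1 _ _ s4.
pose A v := [pred i | ~~ dvd_delta (y i) && (cyc12_norm (y i) == v)].
(* A residue not divisible by 1 + i has norm i or 1; the matching coordinate
   of the sum of all norms counts the residues of each kind mod 2. *)
have cardA_even v (f : cyc12 'F_2 -> 'F_2) :
    (forall i, f (cyc12_norm (y i)) = (i \in A v)%:R) ->
    \sum_i f (cyc12_norm (y i)) = 0 -> (2 %| #|A v|)%N.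
  move=> fA sum0; rewrite (dvdn_pcharf (pchar_Fp (isT : prime 2))) -sum1_card natr_sum.
  apply/eqP; rewrite -[RHS]sum0 big_mkcond /=.
  by apply: eq_bigr => i _; rewrite fA; case: (i \in A v).
have /card_gt1P[a [b [aA bA ab]]] : (1 < #|A (cyc12_norm (y j))|)%N.
  have : (0 < #|A (cyc12_norm (y j))|)%N by apply/card_gt0P; exists j; rewrite inE yj eqxx.
  suff : (2 %| #|A (cyc12_norm (y j))|)%N by lia.
  case: (norm_Ndvd_delta yj) => ->.
    by apply: (cardA_even _ (fun x => x.2)) => // i; have [-> _] := norm_Ndvd_delta_coord (y i).
  by apply: (cardA_even _ (fun x => x.1.1.1)) => // i; have [_ ->] := norm_Ndvd_delta_coord (y i).
have [aj|aj] := eqVneq a j.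
  by exists b; [rewrite -aj eq_sym|move: bA; rewrite inE => /andP[-> /eqP]].
by exists a => //; move: aA; rewrite inE => /andP[-> /eqP].
Qed.

Lemma cyc12F2_addrr (x : cyc12 'F_2) : x + x = 0.
Proof.
have: all (fun x : cyc12 'F_2 => x + x == 0) cyc12F2_enum by vm_compute.
by move/cyc12F2_allP/(_ x)/eqP.
Qed.

Lemma dvd_delta_red_deltacM w : dvd_delta (cyc12_red (deltac _ * w)).
Proof.
have := dvd_delta_deltacM (cyc12_red w).
by rewrite -(cyc12_map_deltac (intr : {rmorphism int -> 'F_2})) -rmorphM.
Qed.

Lemma cyc12_red_zetacXM e w : cyc12_red (zetac _ ^+ e * w) = zetac _ ^+ e * cyc12_red w.
Proof. by rewrite -(cyc12_map_zetac (intr : {rmorphism int -> 'F_2})) -rmorphXn -rmorphM. Qed.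

(** * Evaluation at zeta12 *)

Lemma sqrt3_irrational_int (p q : int) : p * p = 3 * (q * q) -> q = 0.
Proof.
move=> h; apply/eqP; apply: contraT => q0.
have hn : (`|p| * `|p| = 3 * (`|q| * `|q|))%N by rewrite -!abszM h abszM.
have p0 : p != 0 by apply: contraNneq q0 => p0; move: h; rewrite p0; nia.
have := congr1 (logn 3) hn.
rewrite !lognM ?muln_gt0 ?absz_gt0 ?q0 ?p0 // (logn_prime 3 (isT : prime 3)) /=.
lia.
Qed.

Section Cyc12Complex.
Variable R : realType.
Local Notation C := R[i].
Local Notation zeta := (zeta12 R).
Local Notation s3 := (Num.sqrt (3 : R)).

Lemma sqrt3_sqr : s3 * s3 = 3.
Proof. by rewrite -expr2 sqr_sqrtr // ler0n. Qed.

Lemma complex_ext (x y : C) : complex.Re x = complex.Re y -> complex.Im x = complex.Im y -> x = y.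
Proof. by case: x y => [a b] [c d] /= -> ->. Qed.

Lemma zeta12_sqr : zeta ^+ 2 = Complex (1 / 2) (s3 / 2).
Proof. by have h3 := sqrt3_sqr; apply: complex_ext => /=; lra. Qed.

Lemma zeta12_cube : zeta ^+ 3 = 'i.
Proof. by rewrite exprS zeta12_sqr; have h3 := sqrt3_sqr; apply: complex_ext => /=; lra. Qed.

Lemma zeta12_minpoly : zeta ^+ 4 - zeta ^+ 2 + 1 = 0.
Proof.
rewrite (exprS _ 3) zeta12_cube zeta12_sqr.
by have h3 := sqrt3_sqr; apply: complex_ext => /=; lra.
Qed.

Lemma conj_zeta12 : Num.conj zeta = zeta - zeta ^+ 3.
Proof. by rewrite zeta12_cube; apply: complex_ext => /=; lra. Qed.

Lemma zeta12_mul_conj : zeta * Num.conj zeta = 1.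
Proof. by have h3 := sqrt3_sqr; apply: complex_ext => /=; lra. Qed.

Definition cyc12_eval (x : cyc12 int) : C :=
  let: (a, b, c, d) := x in
  a%:~R + b%:~R * zeta + c%:~R * zeta ^+ 2 + d%:~R * zeta ^+ 3.

Fact cyc12_eval_is_zmod_morphism : zmod_morphism cyc12_eval.
Proof. by move=> [[[a b] c] d] [[[e f] g] h]; rewrite /= !intrB; ring. Qed.

Fact cyc12_eval_is_monoid_morphism : monoid_morphism cyc12_eval.
Proof.
split=> [|[[[a b] c] d] [[[e f] g] h]]; first by rewrite /= mulr1z !mulr0z; ring.
rewrite /= !(intrD, intrM, intrB); apply/eqP; rewrite -subr_eq0; apply/eqP.
set n4 := (b%:~R * h%:~R + c%:~R * g%:~R + d%:~R * f%:~R : C).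
set n5 := (c%:~R * h%:~R + d%:~R * g%:~R : C).
set n6 := (d%:~R * h%:~R : C).
transitivity ((zeta ^+ 4 - zeta ^+ 2 + 1) * - (n4 + n5 * zeta + n6 * (zeta ^+ 2 + 1))).
  by rewrite /n4 /n5 /n6; ring.
by rewrite zeta12_minpoly mul0r.
Qed.

HB.instance Definition _ := GRing.isZmodMorphism.Build _ _ cyc12_eval
  cyc12_eval_is_zmod_morphism.
HB.instance Definition _ := GRing.isMonoidMorphism.Build _ _ cyc12_eval
  cyc12_eval_is_monoid_morphism.

Lemma intr_complex (a : int) : (a%:~R : C) = Complex a%:~R 0.
Proof. by rewrite -(rmorph_int (real_complex R)). Qed.

Lemma cyc12_eval_complex a b c d : cyc12_eval (cyc a b c d) =
  Complex (a%:~R + c%:~R / 2 + b%:~R * s3 / 2) (b%:~R / 2 + d%:~R + c%:~R * s3 / 2).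
Proof.
rewrite /= zeta12_cube zeta12_sqr !intr_complex; have h3 := sqrt3_sqr.
by apply: complex_ext => /=; lra.
Qed.

Lemma conj_cyc12_eval x : Num.conj (cyc12_eval x) = cyc12_eval (cyc12_conj x).
Proof.
case: x => [[[a b] c] d]; rewrite [cyc12_conj _]/= !cyc12_eval_complex.
by rewrite !(intrD, intrN, intrB); have h3 := sqrt3_sqr; apply: complex_ext => /=; lra.
Qed.

Lemma cyc12_eval_norm x : cyc12_eval (cyc12_norm x) = cyc12_eval x * Num.conj (cyc12_eval x).
Proof. by rewrite rmorphM conj_cyc12_eval. Qed.

Lemma cyc12_eval_zetac : cyc12_eval (zetac _) = Num.conj zeta.
Proof. by rewrite conj_zeta12 /= mulr1z mulrN1z !mulr0z; ring. Qed.

Lemma cyc12_eval_deltac : cyc12_eval (deltac _) = 1 - 'i.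
Proof. by rewrite /= zeta12_cube mulr1z mulrN1z !mulr0z; ring. Qed.

Lemma cyc12_eval_zetacXM e w :
  cyc12_eval (zetac _ ^+ e * w) = Num.conj zeta ^+ e * cyc12_eval w.
Proof. by rewrite rmorphM rmorphXn; congr (_ ^+ _ * _); apply: cyc12_eval_zetac. Qed.

Lemma cyc12_eval_deltacM w : cyc12_eval (deltac _ * w) = (1 - 'i) * cyc12_eval w.
Proof. by rewrite rmorphM; congr (_ * _); apply: cyc12_eval_deltac. Qed.

Lemma sqrt3_irrational (p q : int) : p%:~R + q%:~R * s3 = 0 -> p = 0 /\ q = 0.
Proof.
move=> h; have hq : q = 0.
  apply: (@sqrt3_irrational_int p); apply: (@intr_inj R); rewrite !intrM.
  have -> : (p%:~R : R) = - (q%:~R * s3) by apply/eqP; rewrite -subr_eq0 opprK h.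
  by rewrite mulrNN mulrACA sqrt3_sqr; ring.
by move: h; rewrite hq mul0r addr0 => /eqP; rewrite intr_eq0 => /eqP.
Qed.

Lemma cyc12_eval_inj : injective cyc12_eval.
Proof.
apply: raddf_inj => -[[[a b] c] d].
change (cyc12_eval (cyc a b c d) = 0 -> cyc a b c d = 0); rewrite cyc12_eval_complex => -[h1 h2].
have [e1 e2] : 2 * a + c = 0 /\ b = 0 by apply: sqrt3_irrational; rewrite intrD intrM; lra.
have [e3 e4] : b + 2 * d = 0 /\ c = 0 by apply: sqrt3_irrational; rewrite intrD intrM; lra.
by congr (_, _, _, _); lia.
Qed.

End Cyc12Complex.

Arguments cyc12_eval {R}.

(** * The rings R12 and Z[zeta12] in C *)

Section R12Subring.
Variable R : realType.
Local Notation C := R[i].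
Local Notation zeta := (zeta12 R).
Local Notation eval := (@cyc12_eval R).

Definition R12 : pred C := fun x => `[< in_R12 x >].

Lemma R12P x : reflect (in_R12 x) (x \in R12).
Proof. exact: asboolP. Qed.

Fact R12_subring_closed : subring_closed R12.
Proof.
split=> [|x y /R12P hx /R12P hy|x y /R12P hx /R12P hy]; apply/R12P => S S1 SB SM Sh Sz //.
  exact: SB (hx S S1 SB SM Sh Sz) (hy S S1 SB SM Sh Sz).
exact: SM (hx S S1 SB SM Sh Sz) (hy S S1 SB SM Sh Sz).
Qed.

HB.instance Definition _ := GRing.isSubringClosed.Build C R12 R12_subring_closed.

Lemma R12_half : 1 / 2 \in R12.
Proof. by apply/R12P => S. Qed.

Lemma R12_zeta : zeta \in R12.
Proof. by apply/R12P => S. Qed.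

Lemma R12_i : 'i \in R12.
Proof. by rewrite -zeta12_cube; apply/rpredX/R12_zeta. Qed.

Lemma R12_conj x : x \in R12 -> Num.conj x \in R12.
Proof.
move/R12P/(_ (fun y => Num.conj y \in R12)); apply=> [|a b|a b||].
- by rewrite rmorph1; apply: rpred1.
- by rewrite rmorphB; apply: rpredB.
- by rewrite rmorphM; apply: rpredM.
- by rewrite rmorphM rmorph1 fmorphV rmorph_nat R12_half.
- by rewrite conj_zeta12; apply: rpredB; [|apply: rpredX]; apply: R12_zeta.
Qed.

Definition Zzeta : pred C := fun x => `[< exists w, x = eval w >].

Lemma ZzetaP x : reflect (exists w, x = eval w) (x \in Zzeta).
Proof. exact: asboolP. Qed.

Fact Zzeta_subring_closed : subring_closed Zzeta.
Proof.
split=> [|_ _ /ZzetaP[v ->] /ZzetaP[w ->]|_ _ /ZzetaP[v ->] /ZzetaP[w ->]];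
  apply/ZzetaP; [exists 1; rewrite rmorph1|exists (v - w); rewrite rmorphB|
                 exists (v * w); rewrite rmorphM] => //.
Qed.

HB.instance Definition _ := GRing.isSubringClosed.Build C Zzeta Zzeta_subring_closed.

Lemma Zzeta_i : 'i \in Zzeta.
Proof. by apply/ZzetaP; exists (cyc 0 0 0 1); rewrite /= zeta12_cube mulr1z !mulr0z; ring. Qed.

Lemma Zzeta_delta : 1 + 'i \in Zzeta.
Proof. by apply: rpredD; [apply: rpred1|apply: Zzeta_i]. Qed.

Lemma Zzeta_zeta : zeta \in Zzeta.
Proof. by apply/ZzetaP; exists (cyc 0 1 0 0); rewrite /= mulr1z !mulr0z; ring. Qed.

Lemma R12_Zzeta_denom x : x \in R12 -> exists n, 2 ^+ n * x \in Zzeta.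
Proof.
move/R12P/(_ (fun y => exists n, 2 ^+ n * y \in Zzeta)).
apply=> [|a b [n ha] [k hb]|a b [n ha] [k hb]||].
- by exists 0%N; rewrite mul1r; apply: rpred1.
- exists (n + k)%N.
  have -> : 2 ^+ (n + k) * (a - b) = 2 ^+ k * (2 ^+ n * a) - 2 ^+ n * (2 ^+ k * b).
    by rewrite exprD; ring.
  by apply: rpredB; apply: rpredM => //; apply: rpredX; apply: rpred_nat.
- by exists (n + k)%N; rewrite exprD mulrACA; apply: rpredM.
- by exists 1%N; rewrite expr1 mul1r mulfV ?pnatr_eq0 //; apply: rpred1.
- by exists 0%N; rewrite mul1r Zzeta_zeta.
Qed.

Lemma Zzeta_delta_denom x : x \in R12 -> exists k, (1 + 'i) ^+ k * x \in Zzeta.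
Proof.
move=> /R12_Zzeta_denom[n hn]; exists (n + n)%N.
have -> : (1 + 'i) ^+ (n + n) = 'i ^+ n * 2 ^+ n :> C.
  rewrite exprD -exprMn -exprMn; congr (_ ^+ n).
  transitivity (1 + 2 * 'i + 'i ^+ 2 : C); first by ring.
  by rewrite sqrCi; ring.
by rewrite -mulrA; apply: rpredM => //; apply/rpredX/Zzeta_i.
Qed.

Lemma delta_neq0 : 1 + 'i != 0 :> C.
Proof. by apply/eqP => /(congr1 (@complex.Re R)) /=; rewrite addr0 => /eqP; rewrite oner_eq0. Qed.

Lemma deltac_neq0 : 1 - 'i != 0 :> C.
Proof. by apply/eqP => /(congr1 (@complex.Re R)) /=; rewrite subr0 => /eqP; rewrite oner_eq0. Qed.

Lemma delta_mul_deltac : (1 + 'i) * (1 - 'i) = 2 :> C.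
Proof. by rewrite mulrC -subr_sqr expr1n sqrCi opprK. Qed.

Lemma normC_delta : `|1 + 'i : C| ^+ 2 = 2.
Proof.
rewrite normCK -delta_mul_deltac; congr (_ * _).
by rewrite rmorphD rmorph1; congr (_ + _); exact: conjCi.
Qed.

Lemma cyc12_eval_dvd_delta z :
  dvd_delta (cyc12_red z) -> exists w, eval z = (1 + 'i) * eval w.
Proof.
move/deltacM_dvd_delta; rewrite -(cyc12_map_deltac (intr : {rmorphism int -> 'F_2})).
rewrite -rmorphM => /cyc12_red_eq0[w hw]; exists w; apply: (mulfI deltac_neq0).
by rewrite -cyc12_eval_deltac -rmorphM hw rmorphM rmorph_nat cyc12_eval_deltac mulrA
  [_ * (1 + 'i)]mulrC delta_mul_deltac.
Qed.

End R12Subring.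

Arguments R12 {R}.
Arguments Zzeta {R}.

(** * One- and two-level operators *)

Lemma ord2P (a : 'I_2) : a = i0 \/ a = i1.
Proof. by case: a => [[|[|//]] ?]; [left|right]; apply/val_inj. Qed.

Lemma sum_ord2 (V : nmodType) (F : 'I_2 -> V) : \sum_k F k = F i0 + F i1.
Proof. by rewrite !big_ord_recl big_ord0 addr0; congr (F _ + F _); apply/val_inj. Qed.

Lemma ltn_ord_neq n (j j' : 'I_n) : (j < j')%N -> j != j'.
Proof. by move=> h; rewrite -val_eqE /= neq_ltn h. Qed.

Lemma conjCN (F : numClosedFieldType) (x : F) : Num.conj (- x) = - Num.conj x.
Proof. exact: rmorphN. Qed.

Section LevelOperators.
Variables (R : realType) (m : nat).
Local Notation C := R[i].
Implicit Types (A B : 'M[C]_m) (j : 'I_m) (c : C) (M : 'M[C]_2).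

Lemma conj_trE n (A : 'M[C]_n) a b : conj_tr A a b = Num.conj (A b a).
Proof. by rewrite !mxE. Qed.

Lemma conj_trM A B : conj_tr (A *m B) = conj_tr B *m conj_tr A.
Proof. by rewrite /conj_tr trmx_mul map_mxM. Qed.

Lemma conj_trK A : conj_tr (conj_tr A) = A.
Proof. by apply/matrixP => a b; rewrite !conj_trE conjCK. Qed.

Lemma conj_tr1 : conj_tr (1%:M : 'M[C]_m) = 1%:M.
Proof. by apply/matrixP => a b; rewrite conj_trE !mxE eq_sym rmorph_nat. Qed.

Lemma unitary1 : unitary (1%:M : 'M[C]_m).
Proof. by split; rewrite conj_tr1 mulmx1. Qed.

Lemma unitaryM A B : unitary A -> unitary B -> unitary (A *m B).
Proof.
move=> [hA1 hA2] [hB1 hB2]; split; rewrite conj_trM.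
  by rewrite mulmxA -(mulmxA A) hB1 mulmx1 hA1.
by rewrite mulmxA -(mulmxA _ _ A) hA2 mulmx1 hB2.
Qed.

Lemma unitary_conj_tr A : unitary A -> unitary (conj_tr A).
Proof. by move=> [h1 h2]; split; rewrite conj_trK. Qed.

Lemma one_level_mulmx c j A a b :
  (one_level c j *m A) a b = (if a == j then c else 1) * A a b.
Proof.
rewrite mxE (bigD1 a) //= big1 ?addr0 => [|k ka]; first by rewrite mxE eqxx.
by rewrite mxE eq_sym (negbTE ka) mul0r.
Qed.

Lemma one_level_mul c d j : one_level c j *m one_level d j = one_level (c * d) j.
Proof.
apply/matrixP => a b; rewrite one_level_mulmx !mxE.
by case: (a == b); case: (a == j); rewrite ?mulr0 ?mul1r.
Qed.

Lemma one_level1 j : one_level (1 : C) j = 1%:M.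
Proof. by apply/matrixP => a b; rewrite !mxE; case: (a == b); case: (a == j). Qed.

Lemma conj_tr_one_level c j : conj_tr (one_level c j) = one_level (Num.conj c) j.
Proof.
apply/matrixP => a b; rewrite conj_trE !mxE eq_sym.
by case: eqP => [->|_]; [case: (b == j); rewrite ?rmorph1|rewrite rmorph0].
Qed.

Lemma unitary_one_level c j : c * Num.conj c = 1 -> unitary (one_level c j).
Proof.
move=> h; split; rewrite conj_tr_one_level one_level_mul ?h ?one_level1 //.
by rewrite mulrC h one_level1.
Qed.

Section TwoLevel.
Variables (j j' : 'I_m).
Hypothesis neq_jj' : j != j'.

Let neq_j'j : j' != j.
Proof. by rewrite eq_sym. Qed.

Lemma two_level_entry M a b : two_level M j j' a b =
  if a == j then (if b == j then M i0 i0 else if b == j' then M i0 i1 else 0)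
  else if a == j' then (if b == j then M i1 i0 else if b == j' then M i1 i1 else 0)
  else (a == b)%:R.
Proof.
rewrite mxE; case: (eqVneq a j) => [->|aj]; case: (eqVneq b j) => [->|bj];
  rewrite ?eqxx ?(negbTE neq_j'j) ?(negbTE neq_jj') ?(negbTE aj) ?(negbTE bj) ?andbT ?andbF //=.
all: try by [case: (b == j') | case: (a == j')].
case: (eqVneq a j') => [->|aj'] /=; last by case: (a == b).
by case: (eqVneq b j').
Qed.

Lemma two_level_mulmx M A a b : (two_level M j j' *m A) a b =
  if a == j then M i0 i0 * A j b + M i0 i1 * A j' b
  else if a == j' then M i1 i0 * A j b + M i1 i1 * A j' b
  else A a b.
Proof.
have sel (x y : C) :
    \sum_k (if k == j then x else if k == j' then y else 0) * A k b = x * A j b + y * A j' b.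
  rewrite (bigD1 j) // (bigD1 j') //= !eqxx (negbTE neq_j'j).
  by rewrite big1 ?addr0 // => k /andP[/negbTE-> /negbTE->]; rewrite mul0r.
rewrite mxE; under eq_bigr => k _ do rewrite two_level_entry.
case: ifP => _; first exact: sel.
case: ifP => _; first exact: sel.
rewrite (bigD1 a) //= eqxx mul1r big1 ?addr0 // => k ka.
by rewrite eq_sym (negbTE ka) mul0r.
Qed.

Lemma two_level_mul M N : two_level M j j' *m two_level N j j' = two_level (M *m N) j j'.
Proof.
apply/matrixP => a b; rewrite two_level_mulmx !two_level_entry !mxE !sum_ord2.
rewrite !eqxx (negbTE neq_j'j).
by case: (a == j); case: (a == j'); case: (b == j); case: (b == j'); rewrite /= ?mulr0 ?addr0.
Qed.

Lemma two_level1 : two_level (1%:M : 'M[C]_2) j j' = 1%:M.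
Proof.
apply/matrixP => a b; rewrite two_level_entry !mxE.
have [->|aj] := eqVneq a j; first by case: (eqVneq b j) => //; case: (b == j').
have [->|//] := eqVneq a j'.
have [->|bj] := eqVneq b j; first by rewrite (negbTE neq_j'j).
by case: (eqVneq b j').
Qed.

Lemma conj_tr_two_level M : conj_tr (two_level M j j') = two_level (conj_tr M) j j'.
Proof.
apply/matrixP => a b; rewrite !mxE (eq_sym a b).
by case: (a == j); case: (a == j'); case: (b == j); case: (b == j'); case: (b == a);
  rewrite /= ?rmorph1 ?rmorph0.
Qed.

Lemma unitary_two_level M : unitary M -> unitary (two_level M j j').
Proof.
by move=> [h1 h2]; split; rewrite conj_tr_two_level two_level_mul ?h1 ?h2 two_level1.
Qed.

End TwoLevel.
End LevelOperators.

Section Generators.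
Variable R : realType.
Local Notation C := R[i].

Definition R12_mx n (A : 'M[C]_n) := forall a b, A a b \in R12.

Lemma R12_mxM n (A B : 'M[C]_n) : R12_mx A -> R12_mx B -> R12_mx (A *m B).
Proof. by move=> hA hB a b; rewrite mxE; apply: rpred_sum => k _; apply: rpredM. Qed.

Lemma R12_mx_conj_tr n (A : 'M[C]_n) : R12_mx A -> R12_mx (conj_tr A).
Proof. by move=> hA a b; rewrite conj_trE; apply: R12_conj. Qed.

Lemma R12_mx1 n : R12_mx (1%:M : 'M[C]_n).
Proof. by move=> a b; rewrite mxE; apply: rpred_nat. Qed.

Lemma R12_mx_one_level n c (j : 'I_n) : c \in R12 -> R12_mx (one_level c j).
Proof. by move=> hc a b; rewrite mxE; case: ifP => _; [case: ifP|]; rewrite // ?rpred1 ?rpred0. Qed.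

Lemma R12_mx_two_level n M (j j' : 'I_n) : R12_mx M -> R12_mx (two_level M j j').
Proof. by move=> hM a b; rewrite mxE; do 5!case: ifP => _ //; rewrite ?rpred1 ?rpred0. Qed.

Lemma R12_mx_Xgate : R12_mx (Xgate R).
Proof. by move=> a b; rewrite mxE; case: ifP => _; [apply: rpred0|apply: rpred1]. Qed.

Lemma R12_mx_Hprime : R12_mx (Hprime R).
Proof.
move=> a b; rewrite mxE; apply: rpredM; last by case: ifP => _; rewrite ?rpredN rpred1.
apply: rpredM; first by apply: rpredD; [apply: rpred1|apply: R12_i].
by have := R12_half R; rewrite mul1r.
Qed.

Lemma unitary_Xgate : unitary (Xgate R).
Proof.
split; apply/matrixP => a b; rewrite !mxE sum_ord2 !mxE;
  by case: (ord2P a) => ->; case: (ord2P b) => ->; rewrite /= ?rmorph0 ?rmorph1; ring.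
Qed.

Lemma conj_half_delta : Num.conj ((1 + 'i) / 2 : C) = (1 - 'i) / 2.
Proof.
rewrite rmorphM rmorphD rmorph1 fmorphV rmorph_nat; congr ((1 + _) / 2); exact: conjCi.
Qed.

Lemma unitary_Hprime : unitary (Hprime R).
Proof.
set h : C := (1 + 'i) / 2; set h' : C := (1 - 'i) / 2.
have conj_h : Num.conj h = h' := conj_half_delta.
have conj_hN : Num.conj (- h) = - h' by rewrite conjCN conj_h.
have hh' : h * h' = 1 / 2 by rewrite /h /h' mulrACA delta_mul_deltac; field.
split; apply/matrixP => a b; rewrite !mxE sum_ord2 !mxE;
  case: (ord2P a) => ->; case: (ord2P b) => ->;
  rewrite /= -/h -/h' ?mulr1 ?mulrN1 ?conj_hN ?conj_h ?mulrN ?mulNr ?opprK ?[h' * h]mulrC hh'.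
all: by [rewrite subrr | field].
Qed.

Lemma generator_unitary_R12 n (G : 'M[C]_n) : generator G -> unitary G /\ R12_mx G.
Proof.
case=> [[j ->]|[j [j' [/ltn_ord_neq jj' [->|->]]]]]; split.
- by apply: unitary_one_level; apply: zeta12_mul_conj.
- by apply: R12_mx_one_level; apply: R12_zeta.
- exact: unitary_two_level unitary_Xgate.
- exact: R12_mx_two_level R12_mx_Xgate.
- exact: unitary_two_level unitary_Hprime.
- exact: R12_mx_two_level R12_mx_Hprime.
Qed.

Lemma mx_prod_unitary_R12 n (s : seq 'M[C]_n) : (forall G, G \in s -> generator G) ->
  unitary (mx_prod s) /\ R12_mx (mx_prod s).
Proof.
elim: s => [|G s IH] gen_s; first by split; [apply: unitary1|apply: R12_mx1].
have [uG rG] := generator_unitary_R12 (gen_s G (mem_head _ _)).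
have [us rs] := IH (fun H sH => gen_s H (mem_behead (sH : H \in behead (G :: s)))).
by split; [apply: unitaryM|apply: R12_mxM].
Qed.

Lemma conj_tr_Xgate : conj_tr (Xgate R) = Xgate R.
Proof. by apply/matrixP => a b; rewrite !mxE (eq_sym b a); case: (a == b); rewrite ?conjC0 ?conjC1. Qed.

Lemma conj_tr_Xgate_mulmx n (p q : 'I_n) (U : 'M[C]_n) a b : p != q ->
  (conj_tr (two_level (Xgate R) p q) *m U) a b =
  if a == p then U q b else if a == q then U p b else U a b.
Proof.
move=> pq; rewrite conj_tr_two_level // conj_tr_Xgate two_level_mulmx // !mxE /=.
by rewrite !mul0r !mul1r add0r addr0.
Qed.

Lemma conj_tr_Hprime_mulmx n (p q : 'I_n) (U : 'M[C]_n) a b : p != q ->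
  (conj_tr (two_level (Hprime R) p q) *m U) a b =
  if a == p then (1 - 'i) / 2 * (U p b + U q b)
  else if a == q then (1 - 'i) / 2 * (U p b - U q b) else U a b.
Proof.
move=> pq; rewrite conj_tr_two_level // two_level_mulmx // !conj_trE !mxE /=.
by rewrite !mulr1 mulrN1 conjCN conj_half_delta mulrBr mulrDr mulNr.
Qed.

End Generators.

(** * Column-by-column synthesis *)

Lemma mulmx_unit_col (T : pzRingType) n m p (A : 'M[T]_(n, m)) (U : 'M[T]_(m, p)) k b :
  (forall a, U a b = (a == k)%:R) -> forall a, (A *m U) a b = A a k.
Proof.
move=> Ub a; rewrite mxE (bigD1 k) //= Ub eqxx mulr1 big1 ?addr0 // => c ck.
by rewrite Ub (negbTE ck) mulr0.
Qed.

Section Synthesis.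
Variables (R : realType) (m : nat).
Local Notation C := R[i].
Local Notation zeta := (zeta12 R).
Implicit Types (U V W G : 'M[C]_m).

Definition synthesizable U :=
  exists s, (forall G, G \in s -> generator G) /\ U = mx_prod s.

Definition reduced (t : nat) U :=
  [/\ unitary U, R12_mx U & forall a b : 'I_m, (b < t)%N -> U a b = (a == b)%:R].

Definition generator_from (t : nat) G :=
  (exists j : 'I_m, (t <= j)%N /\ G = one_level zeta j) \/
  (exists j j' : 'I_m, [/\ (t <= j)%N, (j < j')%N &
     G = two_level (Xgate R) j j' \/ G = two_level (Hprime R) j j']).

Definition reduces_to (t : nat) U V := reduced t V /\ (synthesizable V -> synthesizable U).

Lemma generator_fromW t G : generator_from t G -> generator G.
Proof. by case=> [[j [_ ->]]|[j [j' [_ jj' e]]]]; [left; exists j|right; exists j, j']. Qed.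

Lemma reduced_row t U (j c : 'I_m) : reduced t U -> (j < t)%N -> c != j -> U j c = 0.
Proof.
move=> [[U1 _] _ Ut] jt cj.
have Ujj : U j j = 1 by rewrite Ut // eqxx.
have := congr1 (fun A : 'M[C]_m => A j j) U1; rewrite !mxE eqxx /=.
rewrite (bigD1 j) //= conj_trE Ujj rmorph1 mulr1 => /(canRL (addKr 1)); rewrite addNr.
under eq_bigr do rewrite conj_trE.
move=> /psumr_eq0P sum0; have /eqP := sum0 (fun k _ => mul_conjC_ge0 (U j k)) c cj.
by rewrite mul_conjC_eq0 => /eqP.
Qed.

Lemma reduces_to_trans t U V W : reduces_to t U V -> reduces_to t V W -> reduces_to t U W.
Proof. by move=> [_ VU] [rW WV]; split=> // /WV /VU. Qed.

Lemma generator_from_row t G (b a : 'I_m) :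
  generator_from t G -> (b < t)%N -> G b a = (b == a)%:R.
Proof.
move=> Gt bt; have bj (j : 'I_m) : (t <= j)%N -> (b == j) = false.
  by move=> tj; apply/negbTE/ltn_ord_neq/(leq_trans bt).
case: Gt => [[j [tj ->]]|[j [j' [tj jj' G2]]]].
  by rewrite mxE (bj j tj); case: (b == a).
have tj' := leq_trans tj (ltnW jj').
by case: G2 => ->; rewrite mxE (bj j tj) (bj j' tj') /=; case: (b == a).
Qed.

Lemma reduces_to_generator t G U :
  generator_from t G -> reduced t U -> reduces_to t U (conj_tr G *m U).
Proof.
move=> Gt [uU rU Ut]; have /generator_unitary_R12[[uG1 uG2] rG] := generator_fromW Gt.
split; last first.
  move=> [s [gen_s e]]; exists (G :: s); split.
    by move=> H; rewrite inE => /orP[/eqP->|]; [exact: generator_fromW Gt|exact: gen_s].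
  by rewrite /= -e mulmxA uG1 mul1mx.
split=> [||a b bt]; first exact/unitaryM/uU/unitary_conj_tr.
  exact/R12_mxM/rU/R12_mx_conj_tr.
rewrite (@mulmx_unit_col _ _ _ _ _ _ b) => [|a']; last by rewrite Ut.
by rewrite conj_trE (generator_from_row _ Gt bt) rmorph_nat eq_sym.
Qed.

Lemma reduces_to_zetacX t (j : 'I_m) e U : (t <= j)%N -> reduced t U ->
  reduces_to t U (one_level (Num.conj zeta ^+ e) j *m U).
Proof.
move=> tj rU; elim: e => [|e IH]; first by rewrite expr0 one_level1 mul1mx.
apply: (reduces_to_trans IH).
rewrite exprS -one_level_mul -mulmxA -conj_tr_one_level.
by apply: reduces_to_generator IH.1; left; exists j.
Qed.

Section Column.
Variable t : 'I_m.
Hypothesis synth_next : forall U, reduced t.+1 U -> synthesizable U.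

Definition col_repr k U (z : 'I_m -> cyc12 int) :=
  forall j, (1 + 'i) ^+ k * U j t = cyc12_eval (z j).

Definition undivided (z : 'I_m -> cyc12 int) := [pred j | ~~ dvd_delta (cyc12_red (z j))].

Lemma col_finish U e : reduced t U -> (forall a, a != t -> U a t = 0) ->
  Num.conj zeta ^+ e * U t t = 1 -> synthesizable U.
Proof.
move=> rU col0 Utt; have [[uV rV Vt] VU] := reduces_to_zetacX e (leqnn t) rU.
apply/VU/synth_next; split=> // a b; rewrite ltnS leq_eqVlt => /orP[/eqP bt|]; last exact: Vt.
rewrite (_ : b = t); last exact: val_inj.
by rewrite one_level_mulmx; case: (eqVneq a t) => [->|/col0->]; rewrite ?mulr0.
Qed.

Lemma col_norm_sum k U z : reduced t U -> col_repr k U z ->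
  \sum_j cyc12_norm (z j) = 2 ^+ k.
Proof.
move=> [[_ uU] _ _] zU; apply: (@cyc12_eval_inj R).
rewrite rmorph_sum rmorphXn rmorph_nat.
transitivity (\sum_j `|(1 + 'i) ^+ k * U j t| ^+ 2).
  by apply: eq_bigr => j _; rewrite zU normCK -cyc12_eval_norm.
under eq_bigr do rewrite normrM normrX exprMn -exprM mulnC exprM normC_delta.
rewrite -mulr_sumr -[RHS]mulr1; congr (_ * _).
have := congr1 (fun A : 'M[C]_m => A t t) uU; rewrite !mxE eqxx mulr1n => <-.
by apply: eq_bigr => j _; rewrite normCK conj_trE mulrC.
Qed.

Lemma col_unit_entry U j0 e : reduced t U -> (forall j, j != j0 -> U j t = 0) ->
  Num.conj zeta ^+ e * U j0 t = 1 -> synthesizable U.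
Proof.
move=> rU U0 Uj0; have tj0 : (t <= j0)%N.
  rewrite leqNgt; apply/negP => j0t; move: Uj0.
  by rewrite (reduced_row rU j0t) ?mulr0 1?eq_sym ?ltn_ord_neq // => /eqP; rewrite eq_sym oner_eq0.
have [tj0e|tj0'] := eqVneq t j0; first by subst j0; exact: col_finish rU U0 Uj0.
have {tj0 tj0'}tj0 : (t < j0)%N by rewrite ltn_neqAle tj0 andbT.
have Xt : generator_from t (two_level (Xgate R) t j0) by right; exists t, j0; split => //; left.
have [rV VU] := reduces_to_generator Xt rU; apply: VU.
have Vt a := conj_tr_Xgate_mulmx U a t (ltn_ord_neq tj0).
apply: (col_finish (e := e) rV) => [a /negbTE at'|]; rewrite Vt ?eqxx // at'.
case: (eqVneq a j0) => [_|aj0] /=; last exact: U0.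
by apply/U0/ltn_ord_neq.
Qed.

Lemma col_base U z : reduced t U -> col_repr 0 U z -> synthesizable U.
Proof.
move=> rU zU; have Uz j : U j t = cyc12_eval (z j) by rewrite -zU expr0 mul1r.
have qf1 : \sum_j cyc12_qf (z j) = 1.
  have := col_norm_sum rU zU; rewrite expr0 cyc12_sumE => -[s0 _ s2 _].
  suff : 2 * \sum_j cyc12_qf (z j) = 2 by lia.
  rewrite mulr_sumr; under eq_bigr do rewrite -cyc12_qf_norm.
  by rewrite big_split /= -mulr_sumr s0 s2.
have [j0 [_ qf_j0 qf_other]] :=
  natr_sum_eq1 (fun j _ => etrans (Znat_def _) (cyc12_qf_ge0 (z j))) qf1.
have [e ze] := cyc12_qf_eq1 qf_j0.
apply: (@col_unit_entry _ j0 e rU) => [j jj0|].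
  by rewrite Uz (cyc12_qf_eq0 (qf_other j jj0 isT)) rmorph0.
by rewrite Uz -cyc12_eval_zetacXM ze rmorph1.
Qed.

Lemma col_lower k U z : col_repr k.+1 U z -> (forall j, j \notin undivided z) ->
  exists z', col_repr k U z'.
Proof.
move=> zU zdiv.
suff /fin_all_exists[z' z'U] j : exists w, (1 + 'i) ^+ k * U j t = cyc12_eval w by exists z'.
have [w zw] := cyc12_eval_dvd_delta R (negbNE (zdiv j)); exists w.
by apply: (mulfI (delta_neq0 R)); rewrite mulrA -exprS zU zw.
Qed.

Lemma undivided_row k U z j : reduced t U -> col_repr k U z -> j \in undivided z -> (t <= j)%N.
Proof.
move=> rU zU; rewrite inE leqNgt; apply: contra => jt.
have /esym : U j t = 0 by apply: (reduced_row rU jt); rewrite eq_sym ltn_ord_neq.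
move/(congr1 (fun x => (1 + 'i) ^+ k * x)); rewrite mulr0 zU -(rmorph0 (@cyc12_eval R)).
by move/cyc12_eval_inj <-; rewrite rmorph0.
Qed.

Lemma col_hadamard k U z (p q : 'I_m) : (t <= p)%N -> (t <= q)%N -> p != q ->
  reduced t U -> col_repr k.+1 U z -> cyc12_red (z p) = cyc12_red (z q) ->
  exists V z', [/\ reduces_to t U V, col_repr k.+1 V z',
    p \notin undivided z', q \notin undivided z' & forall a, a != p -> a != q -> z' a = z a].
Proof.
wlog pq : p q / (p < q)%N.
  move=> hwlog tp tq npq; have [pq|qp|/val_inj pq] := ltngtP p q.
  - exact: hwlog.
  - move=> rU zU /esym zqp.
    have [V [z' [UV z'V qz' pz' z'z]]] := hwlog q p qp tq tp (ltn_ord_neq qp) rU zU zqp.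
    by exists V, z'; split=> // a ap aq; apply: z'z.
  - by rewrite pq eqxx in npq.
move=> tp _ npq rU zU zpq.
(* Equal residues make u + v and u - v even, and conj H' maps (u, v) to
   (1 - i) / 2 (u + v, u - v). *)
have [wp zp] : exists w, z p + z q = 2 * w.
  by apply: cyc12_red_eq0; rewrite rmorphD /= zpq cyc12F2_addrr.
have [wq zq] : exists w, z p - z q = 2 * w.
  by apply: cyc12_red_eq0; rewrite rmorphB /= zpq subrr.
have Ht : generator_from t (two_level (Hprime R) p q) by right; exists p, q; split=> //; right.
exists (conj_tr (two_level (Hprime R) p q) *m U).
exists (fun a => if a == p then deltac _ * wp else if a == q then deltac _ * wq else z a).
split; first exact: reduces_to_generator.
- move=> a; rewrite conj_tr_Hprime_mulmx //.
  case: (eqVneq a p) => _ /=.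
    by rewrite cyc12_eval_deltacM mulrCA mulrDr !zU -rmorphD zp rmorphM rmorph_nat; field.
  case: (eqVneq a q) => _ /=; last exact: zU.
  by rewrite cyc12_eval_deltacM mulrCA mulrBr !zU -rmorphB zq rmorphM rmorph_nat; field.
- by rewrite inE eqxx negbK dvd_delta_red_deltacM.
- by rewrite inE eq_sym (negbTE npq) eqxx negbK dvd_delta_red_deltacM.
- by move=> a /negbTE-> /negbTE->.
Qed.

Lemma col_pair k U z j : reduced t U -> col_repr k.+1 U z -> j \in undivided z ->
  exists V z', [/\ reduces_to t U V, col_repr k.+1 V z' & (#|undivided z'| < #|undivided z|)%N].
Proof.
move=> rU zU jz.
have sum0 : \sum_i cyc12_norm (cyc12_red (z i)) = 0.
  transitivity (cyc12_red (\sum_i cyc12_norm (z i))).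
    by rewrite rmorph_sum; apply: eq_bigr => i _; rewrite -cyc12_map_norm.
  by rewrite (col_norm_sum rU zU) rmorphXn rmorph_nat exprS mulr2n cyc12F2_addrr mul0r.
have [j' j'j [j'z nj']] := Ndvd_delta_partner sum0 jz.
have [e ej] := Ndvd_delta_norm_eq jz j'z (esym nj').
have tj := undivided_row rU zU jz; have tj' := undivided_row rU zU j'z.
have [rV1 V1U] := reduces_to_zetacX e tj' rU.
pose z1 a := if a == j' then zetac _ ^+ e * z j' else z a.
have z1V1 : col_repr k.+1 (one_level (Num.conj zeta ^+ e) j' *m U) z1.
  move=> a; rewrite one_level_mulmx /z1; case: (eqVneq a j') => [->|_]; last by rewrite mul1r zU.
  by rewrite mulrCA zU cyc12_eval_zetacXM.
have z1jj' : cyc12_red (z1 j) = cyc12_red (z1 j') by rewrite /z1 eqxx eq_sym (negbTE j'j) ej cyc12_red_zetacXM.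
have jj' : j != j' by rewrite eq_sym.
have [V [z' [V1V z'V jz' j'z' z'z]]] := col_hadamard tj tj' jj' rV1 z1V1 z1jj'.
exists V, z'; split=> //; first exact: reduces_to_trans V1V.
apply/proper_card/properP; split; last by exists j; rewrite ?jz ?(negbTE jz').
apply/subsetP => a; have [->|aj] := eqVneq a j; first by rewrite (negbTE jz').
have [->|aj'] := eqVneq a j'; first by rewrite (negbTE j'z').
by rewrite !inE z'z // /z1 (negbTE aj').
Qed.

Lemma col_reduce k U z : reduced t U -> col_repr k U z -> synthesizable U.
Proof.
elim: k U z => [|k IHk] U z; first exact: col_base.
have [n] := ubnP #|undivided z|; elim: n U z => // n IHn U z zn rU zU.
case: (pickP (undivided z)) => [j jz|nz].
  have [V [z' [[rV VU] z'V lt_z'z]]] := col_pair rU zU jz.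
  exact/VU/(IHn V z' (leq_trans lt_z'z zn) rV z'V).
have [z' z'U] := col_lower zU (fun j => negbT (nz j)).
exact: IHk z'U.
Qed.

Lemma col_exponent U : R12_mx U -> exists k z, col_repr k U z.
Proof.
move=> R12U.
have /fin_all_exists[kf kfU] j : exists k, (1 + 'i) ^+ k * U j t \in Zzeta.
  exact: Zzeta_delta_denom.
pose k := (\max_j kf j)%N; exists k.
suff /fin_all_exists[z zU] j : exists w, (1 + 'i) ^+ k * U j t = cyc12_eval w by exists z.
have kj : (kf j <= k)%N := leq_bigmax j.
apply/ZzetaP; rewrite -(subnK kj) exprD -mulrA.
by apply: rpredM => //; apply/rpredX/Zzeta_delta.
Qed.

Lemma synthesizable_col U : reduced t U -> synthesizable U.
Proof.
move=> rU; have [_ R12U _] := rU; have [k [z zU]] := col_exponent R12U.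
exact: col_reduce rU zU.
Qed.

End Column.

Lemma synthesizable_reduced t U : reduced t U -> synthesizable U.
Proof.
have [n] := ubnP (m - t); elim: n t U => // n IHn t U mtn rU.
have [tm|mt] := ltnP t m.
  by apply: (@synthesizable_col (Ordinal tm)) => // V; apply: (IHn t.+1); lia.
have -> : U = 1%:M.
  by case: rU => _ _ Ut; apply/matrixP => a b; rewrite mxE Ut // (leq_trans _ mt).
by exists [::].
Qed.

End Synthesis.

Theorem theorem7p6 (R : realType) (m : nat) (U : 'M[R[i]]_m) :
  (unitary U /\ (forall a b, in_R12 (U a b))) <->
  (exists s : seq 'M[R[i]]_m, (forall G, G \in s -> generator G) /\ U = mx_prod s).
Proof.
split=> [[uU R12U]|[s [gen_s ->]]].
  by apply: (@synthesizable_reduced R m 0); split=> // a b; apply/R12P; apply: R12U.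
have [uU R12U] := mx_prod_unitary_R12 gen_s.
by split=> // a b; apply/R12P/R12U.
Qed.
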